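(* Let $m\ge 1$ and let $(\phi_n)_{n\ge 0}$ be vectors in $\mathbb{R}^m$ such that the rank-one symmetric matrices $A_n=\phi_n\phi_n^\top$ satisfy $0\le A_n\le I$. Define the transition matrices $\Phi(i,i)=I$ and $\Phi(n+1,i)=(I-A_n)\Phi(n,i)$ for $n\ge i$. Let $(\mu_j)_{j\ge0}$ be nonnegative real numbers (weights), and for integers $0\le k<N$ set $$S_{Nk}=\sum_{j=k}^{N-1}\mu_jA_j,\qquad B_{jk}=\sum_{l=k}^{j-1}(\phi_j^\top\phi_l)^2 .$$ Then, provided the denominator below is nonzero, $$\|\Phi(N,k)\|^2\le 1-\frac{\lambda_{\min}(S_{Nk})}{\left(\sqrt{\max_{k\le j<N}\mu_j}+\sqrt{\sum_{j=k}^{N-1}\mu_jB_{jk}}\right)^2}.$$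
   Context: $\|\cdot\|$ denotes the spectral norm of a matrix, $\lambda_{\min}$ the smallest eigenvalue of a symmetric matrix, and $0\le A\le I$ is in the positive semidefinite (Loewner) order. *)

From HB Require Import structures.
From mathcomp Require Import all_boot all_order all_algebra.
From mathcomp Require Import boolp classical_sets reals.
Set Implicit Arguments. Unset Strict Implicit. Unset Printing Implicit Defensive.
Import Order.TTheory GRing.Theory Num.Theory.
Local Open Scope ring_scope.
Local Open Scope classical_set_scope.

Section Defs.
Variable R : realType.

Definition vnorm2 m (x : 'cV[R]_m) : R := Num.sqrt (\sum_i x i 0 ^+ 2).

Definition specnorm m n (M : 'M[R]_(m, n)) : R :=
  sup [set vnorm2 (M *m x) | x in [set x : 'cV[R]_n | vnorm2 x = 1]].

Definition lambda_min m (S : 'M[R]_m) : R :=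
  inf [set a : R | eigenvalue S a].

Definition psd m (M : 'M[R]_m) : Prop :=
  forall x : 'cV[R]_m, 0 <= (x^T *m M *m x) 0 0.

Definition Amat m (phi : nat -> 'cV[R]_m) (n : nat) : 'M[R]_m :=
  phi n *m (phi n)^T.

(* Phi_rec d i = Phi(i + d, i) *)
Fixpoint Phi_rec m (phi : nat -> 'cV[R]_m) (d i : nat) : 'M[R]_m :=
  match d with
  | 0 => 1%:M
  | d'.+1 => (1%:M - Amat phi (i + d')) *m Phi_rec phi d' i
  end.

Definition Phi m (phi : nat -> 'cV[R]_m) (n i : nat) : 'M[R]_m :=
  Phi_rec phi (n - i) i.

Definition Smat m (phi : nat -> 'cV[R]_m) (mu : nat -> R) (N k : nat) : 'M[R]_m :=
  \sum_(k <= j < N) mu j *: Amat phi j.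

Definition Bcoef m (phi : nat -> 'cV[R]_m) (j k : nat) : R :=
  \sum_(k <= l < j) (((phi j)^T *m phi l) 0 0) ^+ 2.

Definition mumax (mu : nat -> R) (N k : nat) : R :=
  \big[Num.max/0]_(k <= j < N) mu j.

Definition denom m (phi : nat -> 'cV[R]_m) (mu : nat -> R) (N k : nat) : R :=
  (Num.sqrt (mumax mu N k) + Num.sqrt (\sum_(k <= j < N) mu j * Bcoef phi j k)) ^+ 2.

End Defs.

(* Fix a unit vector x and put y_d = Phi(k+d, k) x, e_d = phi_{k+d}^T y_d.
   Since y_{d+1} = y_d - e_d phi_{k+d} and |phi_{k+d}| <= 1, the energy drops
   at each step: |Phi(N, k) x|^2 <= 1 - sum_d e_d^2.  Unrolling the recursion
   gives phi_j^T x = e_j + sum_{l<j} (phi_j^T phi_l) e_l, so the weighted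
   Minkowski and Cauchy-Schwarz inequalities yield
     x^T S x = sum_j mu_j (phi_j^T x)^2 <= (sqrt(max mu) + sqrt(sum_j mu_j B_j))^2 sum_d e_d^2.
   It remains that lambda_min(S) <= x^T S x: the infimum c of the Rayleigh
   quotient of a symmetric matrix M is an eigenvalue, for otherwise M - c would
   be an invertible positive semidefinite matrix, hence coercive. *)

From HB Require Import structures.
From mathcomp Require Import all_boot all_order all_algebra.
From mathcomp Require Import boolp classical_sets reals.
From mathcomp Require Import ring lra.
Import Order.TTheory GRing.Theory Num.Theory.
Set Implicit Arguments. Unset Strict Implicit. Unset Printing Implicit Defensive.
Local Open Scope ring_scope.

Section CauchySchwarz.
Variable R : realFieldType.

Lemma quad_form_discr (a b c : R) :
  (forall s t : R, 0 <= s ^+ 2 * a + 2 * s * t * b + t ^+ 2 * c) -> b ^+ 2 <= a * c.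
Proof.
move=> H; rewrite -subr_ge0.
have ha : 0 <= a by have := H 1 0; rewrite expr1n; lra.
have hc : 0 <= c by have := H 0 1; rewrite expr1n; lra.
have hca : 0 <= c * (a * c - b ^+ 2) by have := H c (- b); congr (_ <= _); ring.
have haa : 0 <= a * (a * c - b ^+ 2) by have := H b (- a); congr (_ <= _); ring.
have [cpos|c0] := ltrP 0 c; first by rewrite pmulr_rge0 in hca.
have [apos|a0] := ltrP 0 a; first by rewrite pmulr_rge0 in haa.
have -> : c = 0 by apply/eqP; rewrite eq_le c0 hc.
have -> : a = 0 by apply/eqP; rewrite eq_le a0 ha.
have := H 1 1; have := H 1 (-1); rewrite !expr1n; nra.
Qed.

Lemma wcauchy_schwarz (I : Type) (r : seq I) (P : pred I) (w u v : I -> R) :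
  (forall i, P i -> 0 <= w i) ->
  (\sum_(i <- r | P i) w i * u i * v i) ^+ 2 <=
  (\sum_(i <- r | P i) w i * u i ^+ 2) * (\sum_(i <- r | P i) w i * v i ^+ 2).
Proof.
move=> w_ge0; apply: quad_form_discr => s t.
have -> : s ^+ 2 * (\sum_(i <- r | P i) w i * u i ^+ 2) +
    2 * s * t * (\sum_(i <- r | P i) w i * u i * v i) +
    t ^+ 2 * (\sum_(i <- r | P i) w i * v i ^+ 2) =
    \sum_(i <- r | P i) w i * (s * u i + t * v i) ^+ 2.
  by rewrite !mulr_sumr -!big_split /=; apply: eq_bigr => i _; ring.
by apply: sumr_ge0 => i Pi; rewrite mulr_ge0 ?sqr_ge0 ?w_ge0.
Qed.

Lemma cauchy_schwarz (I : Type) (r : seq I) (P : pred I) (u v : I -> R) :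
  (\sum_(i <- r | P i) u i * v i) ^+ 2 <=
  (\sum_(i <- r | P i) u i ^+ 2) * (\sum_(i <- r | P i) v i ^+ 2).
Proof.
have := @wcauchy_schwarz I r P (fun=> 1) u v (fun _ _ => ler01).
by under eq_bigr do rewrite mul1r; under [X in _ <= X * _]eq_bigr do rewrite mul1r;
   under [X in _ <= _ * X]eq_bigr do rewrite mul1r.
Qed.

End CauchySchwarz.

Lemma wminkowski (R : rcfType) (I : Type) (r : seq I) (P : pred I) (w u v : I -> R) :
  (forall i, P i -> 0 <= w i) ->
  \sum_(i <- r | P i) w i * (u i + v i) ^+ 2 <=
  (Num.sqrt (\sum_(i <- r | P i) w i * u i ^+ 2) +
   Num.sqrt (\sum_(i <- r | P i) w i * v i ^+ 2)) ^+ 2.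
Proof.
move=> w_ge0; set a := \sum_(i <- r | P i) w i * u i ^+ 2.
set b := \sum_(i <- r | P i) w i * v i ^+ 2.
have a_ge0 : 0 <= a by apply: sumr_ge0 => i Pi; rewrite mulr_ge0 ?sqr_ge0 ?w_ge0.
have b_ge0 : 0 <= b by apply: sumr_ge0 => i Pi; rewrite mulr_ge0 ?sqr_ge0 ?w_ge0.
set c := \sum_(i <- r | P i) w i * u i * v i.
have -> : \sum_(i <- r | P i) w i * (u i + v i) ^+ 2 = a + 2 * c + b.
  by rewrite /a /b /c mulr_sumr -!big_split /=; apply: eq_bigr => i _; ring.
have c_le : c <= Num.sqrt a * Num.sqrt b.
  rewrite -sqrtrM // (le_trans (ler_norm c)) // -sqrtr_sqr ler_wsqrtr //.
  exact: wcauchy_schwarz.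
by rewrite sqrrD !sqr_sqrtr // -mulr_natl; lra.
Qed.

Section Dot.
Variables (R : realFieldType) (m : nat).
Implicit Types (u v w : 'cV[R]_m) (M : 'M[R]_m).

Definition dot u v : R := \sum_i u i 0 * v i 0.

Lemma dotE u v : (u^T *m v) 0 0 = dot u v.
Proof. by rewrite mxE; apply: eq_bigr => i _; rewrite mxE. Qed.

Lemma dotC u v : dot u v = dot v u.
Proof. by apply: eq_bigr => i _; rewrite mulrC. Qed.

Lemma dotDr u v w : dot u (v + w) = dot u v + dot u w.
Proof. by rewrite /dot -big_split; apply: eq_bigr => i _; rewrite mxE mulrDr. Qed.

Lemma dotZr a u v : dot u (a *: v) = a * dot u v.
Proof. by rewrite /dot mulr_sumr; apply: eq_bigr => i _; rewrite mxE mulrCA. Qed.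

Lemma dotBr u v w : dot u (v - w) = dot u v - dot u w.
Proof. by rewrite dotDr -scaleN1r dotZr mulN1r. Qed.

Lemma dotDl u v w : dot (v + w) u = dot v u + dot w u.
Proof. by rewrite !(dotC _ u) dotDr. Qed.

Lemma dotZl a u v : dot (a *: v) u = a * dot v u.
Proof. by rewrite !(dotC _ u) dotZr. Qed.

Lemma dotBl u v w : dot (v - w) u = dot v u - dot w u.
Proof. by rewrite !(dotC _ u) dotBr. Qed.

Lemma dot0r u : dot u 0 = 0.
Proof. by rewrite /dot big1 // => i _; rewrite mxE mulr0. Qed.

Lemma dot_sumr (I : Type) (r : seq I) (P : pred I) (F : I -> 'cV[R]_m) u :
  dot u (\sum_(i <- r | P i) F i) = \sum_(i <- r | P i) dot u (F i).
Proof. exact: (big_morph (dot u) (dotDr u) (dot0r u)). Qed.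

Lemma dot_ge0 u : 0 <= dot u u.
Proof. by apply: sumr_ge0 => i _; rewrite -expr2 sqr_ge0. Qed.

Lemma dot_gt0 u : u != 0 -> 0 < dot u u.
Proof.
apply: contraNT; rewrite -leNgt => u_le0.
have : dot u u == 0 by rewrite eq_le u_le0 dot_ge0.
rewrite psumr_eq0 => [/allP u0|i _]; last by rewrite -expr2 sqr_ge0.
apply/eqP/matrixP => i j; rewrite (ord1 j) !mxE.
by have /implyP/(_ isT) := u0 i (mem_index_enum i); rewrite mulf_eq0 orbb => /eqP.
Qed.

Lemma dot_trmx M u v : dot u (M *m v) = dot (M^T *m u) v.
Proof. by rewrite -!dotE mulmxA trmx_mul trmxK. Qed.

Lemma rank1_mul u v : u *m u^T *m v = dot u v *: u.
Proof. by rewrite -mulmxA [u^T *m v]mx11_scalar dotE mul_mx_scalar. Qed.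

Lemma norm_dot_le u v : 2 * `|dot u v| <= dot u u + dot v v.
Proof.
have := dot_ge0 (u - v); have := dot_ge0 (u + v).
rewrite !dotBl !dotBr !dotDl !dotDr (dotC v u).
by have [uv_ge0|uv_lt0] := lerP 0 (dot u v); [rewrite ger0_norm | rewrite ltr0_norm]; lra.
Qed.

Definition frob2 M : R := \sum_i \sum_j M i j ^+ 2.

Lemma frob2_ge0 M : 0 <= frob2 M.
Proof. by apply: sumr_ge0 => i _; apply: sumr_ge0 => j _; exact: sqr_ge0. Qed.

Lemma dot_mul_le_frob2 M u : dot (M *m u) (M *m u) <= frob2 M * dot u u.
Proof.
rewrite /frob2 mulr_suml; apply: ler_sum => i _; rewrite mxE -expr2.
have := cauchy_schwarz (index_enum 'I_m) xpredT (fun j => M i j) (fun j => u j 0).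
by under [X in _ <= _ * X]eq_bigr do rewrite expr2.
Qed.

End Dot.

Section Semidefinite.
Variables (R : realFieldType) (m : nat).
Implicit Types (u v x : 'cV[R]_m) (M : 'M[R]_m).

Lemma norm_dot_mul_le M u : 2 * `|dot u (M *m u)| <= (1 + frob2 M) * dot u u.
Proof.
apply: le_trans (norm_dot_le _ _) _.
by have := dot_mul_le_frob2 M u; rewrite mulrDl mul1r; lra.
Qed.

Variable T : 'M[R]_m.
Hypotheses (T_sym : T^T = T) (T_psd : forall u, 0 <= dot u (T *m u)).

Lemma psd_cauchy_schwarz u v : dot u (T *m v) ^+ 2 <= dot u (T *m u) * dot v (T *m v).
Proof.
apply: quad_form_discr => s t; have := T_psd (s *: u + t *: v).
rewrite mulmxDr -!scalemxAr !dotDl !dotDr !dotZl !dotZr.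
rewrite [dot v (T *m u)]dot_trmx T_sym [dot (T *m v) u]dotC.
by move/le_trans; apply; rewrite le_eqVlt; apply/orP; left; apply/eqP; ring.
Qed.

Lemma psd_unit_coercive : T \in unitmx ->
  exists2 C, 0 < C & forall x, C * dot x x <= dot x (T *m x).
Proof.
move=> T_unit; pose K := frob2 (invmx T); pose L := 1 + frob2 T.
have K_ge0 : 0 <= K := frob2_ge0 _.
have L_gt0 : 0 < L by have := frob2_ge0 T; rewrite /L; lra.
have norm_le x : dot x x <= K * dot (T *m x) (T *m x).
  by have := dot_mul_le_frob2 (invmx T) (T *m x); rewrite mulKmx.
have image_le x : 2 * dot (T *m x) (T *m x) <= L * dot x (T *m x).
  set t := dot (T *m x) (T *m x); set a := dot x (T *m x).
  have a_ge0 : 0 <= a := T_psd x.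
  (* [t = x^T T (T x)], so Cauchy-Schwarz for the form of [T] bounds [t^2] by [a]. *)
  have t2_le : t ^+ 2 <= a * dot (T *m x) (T *m (T *m x)).
    by rewrite /t -{1}T_sym -dot_trmx psd_cauchy_schwarz.
  have b_le : 2 * dot (T *m x) (T *m (T *m x)) <= L * t.
    exact: le_trans (ler_wpM2l _ (ler_norm _)) (norm_dot_mul_le T (T *m x)).
  have : t * (2 * t) <= t * (L * a) by nra.
  have [t0 _|t_neq0] := eqVneq t 0; first by rewrite t0 mulr0 mulr_ge0 // ltW.
  by rewrite ler_pM2l // lt_def t_neq0 dot_ge0.
exists (2 / (K * L + 1)) => [|x]; first by rewrite divr_gt0 //; nra.
rewrite mulrAC ler_pdivrMr; last by nra.
have := norm_le x; have := image_le x; have := T_psd x; nra.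
Qed.

End Semidefinite.

Section Rayleigh.
Local Open Scope classical_set_scope.
Variables (R : realType) (m : nat) (M : 'M[R]_m).
Hypothesis M_sym : M^T = M.

Definition rayleigh : set R :=
  [set dot x (M *m x) / dot x x | x in [set x : 'cV[R]_m | x != 0]].

Lemma rayleigh_lbound : has_lbound rayleigh.
Proof.
exists (- (1 + frob2 M) / 2) => _ [x x0 <-] /=; rewrite ler_pdivlMr ?dot_gt0 //.
have := norm_dot_mul_le M x; have := lerNnormlW (lexx `|dot x (M *m x)|); lra.
Qed.

Lemma rayleigh_inf_mul_le (y : 'cV[R]_m) : inf rayleigh * dot y y <= dot y (M *m y).
Proof.
have [->|y0] := eqVneq y 0; first by rewrite mulmx0 !dot0r mulr0.
rewrite -ler_pdivlMr ?dot_gt0 //; apply: (ge_inf rayleigh_lbound); by exists y.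
Qed.

Lemma rayleigh_inf_eigenvalue (x : 'cV[R]_m) : x != 0 -> eigenvalue M (inf rayleigh).
Proof.
move=> x0; set c := inf rayleigh.
rewrite /eigenvalue /eigenspace kermx_eq0 row_free_unit; apply/negP => T_unit.
pose T := M - c%:M.
have dotT y : dot y (T *m y) = dot y (M *m y) - c * dot y y.
  by rewrite mulmxBl mul_scalar_mx dotBr dotZr.
have T_sym : T^T = T by rewrite linearB /= tr_scalar_mx M_sym.
have T_psd y : 0 <= dot y (T *m y) by rewrite dotT subr_ge0 rayleigh_inf_mul_le.
(* an invertible [M - c] would be coercive, pushing the infimum up to [c + C] *)
have [C C_gt0 T_coercive] := psd_unit_coercive T_sym T_psd T_unit.
suff : c + C <= c by lra.
apply: lb_le_inf; first by exists (dot x (M *m x) / dot x x), x.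
move=> _ [y y0 <-]; rewrite ler_pdivlMr ?dot_gt0 // mulrDl.
by have := T_coercive y; rewrite dotT; lra.
Qed.

Lemma eigenvalue_ge_rayleigh_inf a : eigenvalue M a -> inf rayleigh <= a.
Proof.
case/eigenvalueP => v vM v0.
have Mv : M *m v^T = a *: v^T by rewrite -M_sym -trmx_mul vM linearZ.
by have := rayleigh_inf_mul_le v^T; rewrite Mv dotZr ler_pM2r // dot_gt0 ?trmx_eq0.
Qed.

Lemma lambda_min_le_rayleigh (x : 'cV[R]_m) :
  x != 0 -> lambda_min M * dot x x <= dot x (M *m x).
Proof.
move=> x0; apply: le_trans (rayleigh_inf_mul_le x); rewrite ler_wpM2r ?dot_ge0 //.
apply: ge_inf (rayleigh_inf_eigenvalue x0).
by exists (inf rayleigh) => a; exact: eigenvalue_ge_rayleigh_inf.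
Qed.

End Rayleigh.

Lemma big_nat_from0 (T : Type) (idx : T) (op : T -> T -> T) (F : nat -> T) k N :
  \big[op/idx]_(k <= j < N) F j = \big[op/idx]_(0 <= d < N - k) F (k + d)%N.
Proof. by rewrite -{1}[k]add0n big_addn; apply: eq_bigr => d _; rewrite addnC. Qed.

Section Weights.
Variables (R : realType) (m : nat) (phi : nat -> 'cV[R]_m) (mu : nat -> R).

Lemma Smat_sym N k : (Smat phi mu N k)^T = Smat phi mu N k.
Proof.
rewrite /Smat raddf_sum; apply: eq_bigr => j _.
by rewrite /Amat /= linearZ /= trmx_mul trmxK.
Qed.

Lemma dot_Smat N k x :
  dot x (Smat phi mu N k *m x) = \sum_(k <= j < N) mu j * dot (phi j) x ^+ 2.
Proof.
rewrite /Smat mulmx_suml dot_sumr; apply: eq_bigr => j _.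
by rewrite -scalemxAl /Amat rank1_mul !dotZr (dotC x) mulrA.
Qed.

Lemma Bcoef_from0 k d :
  Bcoef phi (k + d) k = \sum_(0 <= l < d) dot (phi (k + d)) (phi (k + l)) ^+ 2.
Proof. by rewrite /Bcoef big_nat_from0 addKn; apply: eq_bigr => l _; rewrite dotE. Qed.

Lemma le_mumax N k j : (k <= j < N)%N -> mu j <= mumax mu N k.
Proof. by move=> jkN; apply: le_bigmax_seq; rewrite ?mem_index_iota. Qed.

End Weights.

Section Transition.
Variables (R : realType) (m : nat) (phi : nat -> 'cV[R]_m).
Hypothesis I_sub_A_psd : forall n, psd (1%:M - Amat phi n).

Lemma dot_phi_le1 n : dot (phi n) (phi n) <= 1.
Proof.
have := I_sub_A_psd n (phi n).
rewrite -mulmxA dotE mulmxBl mul1mx /Amat rank1_mul dotBr dotZr.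
by have := dot_ge0 (phi n); nra.
Qed.

Variables (k : nat) (x : 'cV[R]_m).
Let y d := Phi_rec phi d k *m x.
Let e d := dot (phi (k + d)) (y d).

Lemma Phi_rec_step d : y d.+1 = y d - e d *: phi (k + d).
Proof. by rewrite /y /= -mulmxA mulmxBl mul1mx /Amat rank1_mul. Qed.

Lemma Phi_rec_energy d : dot (y d) (y d) <= dot x x - \sum_(0 <= l < d) e l ^+ 2.
Proof.
elim: d => [|d IH]; first by rewrite big_geq // subr0 /y mul1mx.
rewrite big_nat_recr //= Phi_rec_step dotBl !dotBr !dotZl !dotZr (dotC (y d)) -/(e d).
by have := dot_phi_le1 (k + d); nra.
Qed.

Lemma Phi_rec_decomp d : x = y d + \sum_(0 <= l < d) e l *: phi (k + l).
Proof.
elim: d => [|d IH]; first by rewrite big_geq // addr0 /y mul1mx.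
by rewrite big_nat_recr //= Phi_rec_step {1}IH addrACA addNr addr0.
Qed.

Lemma dot_phi_decomp d : dot (phi (k + d)) x =
  e d + \sum_(0 <= l < d) dot (phi (k + d)) (phi (k + l)) * e l.
Proof.
rewrite {1}(Phi_rec_decomp d) dotDr dot_sumr; congr (_ + _).
by apply: eq_bigr => l _; rewrite dotZr mulrC.
Qed.

Variables (mu : nat -> R) (N : nat).
Hypotheses (mu_ge0 : forall j, 0 <= mu j) (k_lt_N : (k < N)%N).

Lemma Smat_quad_le :
  dot x (Smat phi mu N k *m x) <= denom phi mu N k * \sum_(0 <= d < N - k) e d ^+ 2.
Proof.
set n := (N - k)%N; set E := \sum_(0 <= d < n) e d ^+ 2.
set M := mumax mu N k; set P := \sum_(k <= j < N) mu j * Bcoef phi j k.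
have E_ge0 : 0 <= E by apply: sumr_ge0 => d _; exact: sqr_ge0.
have M_ge0 : 0 <= M by apply: le_trans (mu_ge0 k) (le_mumax _ _); rewrite leqnn.
have P_ge0 : 0 <= P.
  by apply: sumr_ge0 => j _; rewrite mulr_ge0 ?sumr_ge0 // => l _; exact: sqr_ge0.
pose f d := \sum_(0 <= l < d) dot (phi (k + d)) (phi (k + l)) * e l.
have f_le d : (d <= n)%N -> f d ^+ 2 <= Bcoef phi (k + d) k * E.
  move=> dn; rewrite Bcoef_from0; apply: le_trans (cauchy_schwarz _ _ _ _) _.
  apply: ler_wpM2l; first by apply: sumr_ge0 => l _; exact: sqr_ge0.
  by rewrite /E (big_cat_nat (leq0n d) dn) /= lerDl sumr_ge0 // => l _; exact: sqr_ge0.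
have diag_le : \sum_(0 <= d < n) mu (k + d) * e d ^+ 2 <= M * E.
  rewrite /E mulr_sumr; apply: ler_sum_nat => d /andP [_ dn].
  by apply: ler_wpM2r; [exact: sqr_ge0 | rewrite le_mumax // leq_addr -ltn_subRL].
have off_le : \sum_(0 <= d < n) mu (k + d) * f d ^+ 2 <= P * E.
  rewrite /P (@big_nat_from0 _ _ _ _ k N) mulr_suml; apply: ler_sum_nat => d /andP [_ dn].
  by rewrite -mulrA; apply: ler_wpM2l => //; apply/f_le/ltnW.
rewrite dot_Smat big_nat_from0 -/n; under eq_bigr do rewrite dot_phi_decomp.
apply: le_trans (@wminkowski _ _ (index_iota 0 n) xpredT (fun d => mu (k + d)) e f
  (fun d _ => mu_ge0 (k + d))) _.
have -> : denom phi mu N k * E = (Num.sqrt (M * E) + Num.sqrt (P * E)) ^+ 2.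
  by rewrite /denom -/M -/P !sqrtrM // -mulrDl exprMn sqr_sqrtr.
by rewrite ler_sqr ?nnegrE ?addr_ge0 ?sqrtr_ge0 // lerD // ler_sqrt ?mulr_ge0.
Qed.

Lemma Phi_quad_le : 0 < denom phi mu N k -> dot x x = 1 ->
  dot (Phi phi N k *m x) (Phi phi N k *m x) <=
    1 - lambda_min (Smat phi mu N k) / denom phi mu N k.
Proof.
move=> D_gt0 x1.
have x0 : x != 0.
  by apply/eqP => x0; move: x1; rewrite x0 dot0r => /eqP; rewrite eq_sym oner_eq0.
have := lambda_min_le_rayleigh (Smat_sym phi mu N k) x0; rewrite x1 mulr1 => lam_le.
apply: le_trans (Phi_rec_energy (N - k)) _; rewrite x1 lerD2l lerN2 ler_pdivrMr // mulrC.
exact: le_trans lam_le Smat_quad_le.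
Qed.

End Transition.

Section SpectralNorm.
Local Open Scope classical_set_scope.
Variable R : realType.

Lemma vnorm2E m (x : 'cV[R]_m) : vnorm2 x = Num.sqrt (dot x x).
Proof. by congr Num.sqrt; apply: eq_bigr => i _; rewrite expr2. Qed.

Lemma specnorm_sqr_le m n (A : 'M[R]_(m, n)) (b : R) : (0 < n)%N ->
  (forall x, dot x x = 1 -> dot (A *m x) (A *m x) <= b) -> specnorm A ^+ 2 <= b.
Proof.
move=> n_gt0 A_le; pose i0 := Ordinal n_gt0; pose e0 : 'cV[R]_n := delta_mx i0 0.
have e0_unit : dot e0 e0 = 1.
  rewrite /dot (bigD1 i0) //= big1 => [|i /negPf i_neq0]; rewrite !mxE ?eqxx ?mulr1 ?addr0 //.
  by rewrite i_neq0 mul0r.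
have b_ge0 : 0 <= b := le_trans (dot_ge0 _) (A_le _ e0_unit).
rewrite /specnorm; set V := (X in sup X).
have V_le : ubound V (Num.sqrt b).
  move=> _ [x /= x_unit <-]; rewrite vnorm2E ler_wsqrtr // A_le //.
  by rewrite -(sqr_sqrtr (dot_ge0 x)) -vnorm2E x_unit expr1n.
have V_e0 : V (vnorm2 (A *m e0)) by exists e0; rewrite //= vnorm2E e0_unit sqrtr1.
have s_le : sup V <= Num.sqrt b by apply: ge_sup V_le; exists (vnorm2 (A *m e0)).
have s_ge0 : 0 <= sup V.
  apply: le_trans (sup_upper_bound _ V_e0); first by rewrite vnorm2E sqrtr_ge0.
  by split; [exists (vnorm2 (A *m e0)) | exists (Num.sqrt b)].
by rewrite -(sqr_sqrtr b_ge0) ler_sqr ?nnegrE ?sqrtr_ge0.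
Qed.

End SpectralNorm.

Theorem mainTheorem1 (R : realType) (m : nat) (phi : nat -> 'cV[R]_m)
  (mu : nat -> R) (N k : nat) :
  (0 < m)%N ->
  (forall n, psd (Amat phi n) /\ psd (1%:M - Amat phi n)) ->
  (forall j, 0 <= mu j) ->
  (k < N)%N ->
  denom phi mu N k != 0 ->
  specnorm (Phi phi N k) ^+ 2 <= 1 - lambda_min (Smat phi mu N k) / denom phi mu N k.
Proof.
move=> m_gt0 A_psd mu_ge0 k_lt_N D_neq0.
have I_sub_A_psd n : psd (1%:M - Amat phi n) by case: (A_psd n).
have D_gt0 : 0 < denom phi mu N k by rewrite lt_def D_neq0 sqr_ge0.
by apply: specnorm_sqr_le m_gt0 _ => x; exact: Phi_quad_le.
Qed.
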